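(* Let $q\ge 2$, $n\ge 1$ and $\varepsilon\in\mathbb{N}$. Let $x\in\mathbb{Z}_q^n$ be a hidden vector, and suppose the attacker has access to an oracle $\texttt{Match}_{x,\varepsilon}$ which, on a query $y\in\mathbb{Z}_q^n$, returns $1$ if $d(x,y)\le\varepsilon$ and $0$ otherwise, and additionally always reveals (regardless of the threshold) the set of error positions $\{i: x_i\neq y_i\}$, but not the values $x_i$. Then the attacker can recover $x$ using $\mathcal{O}(q)$ queries to $\texttt{Match}_{x,\varepsilon}$.
   Context: $\mathbb{Z}_q^n=\{0,\dots,q-1\}^n$ is equipped with the Hamming distance $d(x,y)=|\{i\in\{1,\dots,n\}: x_i\neq y_i\}|$. Complexity is measured as the number of oracle queries. *)

From mathcomp Require Import all_boot.
Set Implicit Arguments. Unset Strict Implicit. Unset Printing Implicit Defensive.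

Definition word (n q : nat) := {ffun 'I_n -> 'I_q}.

Definition diffset (n q : nat) (x y : word n q) : {set 'I_n} :=
  [set i | x i != y i].
Definition hamming (n q : nat) (x y : word n q) : nat := #|diffset x y|.

Definition match_oracle (n q eps : nat) (x y : word n q) : bool * {set 'I_n} :=
  (hamming x y <= eps, diffset x y).

(* A (deterministic, adaptive) attacker: a decision tree. Either it stops and
   outputs a guess, or it queries y and continues depending on the answer. *)
Inductive attacker (n q : nat) : Type :=
| Output : word n q -> attacker n q
| Query : word n q -> (bool -> {set 'I_n} -> attacker n q) -> attacker n q.

Fixpoint run (n q eps : nat) (A : attacker n q) (x : word n q) : word n q * nat :=
  match A with
  | Output g => (g, 0)
  | Query y k =>
      let a := match_oracle eps x y in
      let r := run eps (k a.1 a.2) x in (r.1, r.2.+1)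
  end.

From mathcomp Require Import all_boot.

(* The error positions of the constant query c are exactly the positions
   where x differs from c, so this query reveals {i | x i = c}.  Querying
   every symbol once (q queries, ignoring the threshold bit) thus locates
   every coordinate of x. *)

Section ConstantQueries.
Variables (n q : nat).

Definition const_word (c : 'I_q) : word n q := [ffun => c].

Lemma in_diffset_const (x : word n q) c i :
  (i \in diffset x (const_word c)) = (x i != c).
Proof. by rewrite inE ffunE. Qed.

(* [acc] holds the coordinates found so far; the others keep junk values. *)
Fixpoint sweep (cs : seq 'I_q) (acc : word n q) : attacker n q :=
  match cs with
  | [::] => Output acc
  | c :: cs' =>
      Query (const_word c)
        (fun _ D => sweep cs' [ffun i => if i \in D then acc i else c])
  end.

Lemma run_sweep eps (x : word n q) cs acc :
  run eps (sweep cs acc) x =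
    ([ffun i => if x i \in cs then x i else acc i], size cs).
Proof.
elim: cs acc => [|c cs IHcs] acc /=.
  by congr pair; apply/ffunP => i; rewrite ffunE.
rewrite IHcs /=; congr pair; apply/ffunP => i.
rewrite !ffunE in_cons in_diffset_const.
by case: (x i \in cs); [rewrite orbT | case: eqP].
Qed.

Lemma run_sweep_enum eps (x : word n q) acc :
  run eps (sweep (enum 'I_q) acc) x = (x, q).
Proof.
rewrite run_sweep size_enum_ord; congr pair.
by apply/ffunP => i; rewrite ffunE mem_enum.
Qed.

End ConstantQueries.

Theorem theorem6 :
  exists C : nat,
    forall (q n eps : nat), 2 <= q -> 1 <= n ->
      exists A : attacker n q,
        forall x : word n q,
          (run eps A x).1 = x /\ (run eps A x).2 <= C * q.
Proof.
exists 1 => q n eps q_gt1 _.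
have q0 : 'I_q by exact: Ordinal (ltnW q_gt1).
exists (@sweep n q (enum 'I_q) [ffun => q0]) => x.
by rewrite run_sweep_enum mul1n.
Qed.
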